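(* Let $p,n\in\mathbb N$ with $p\ge n\ge 10$, and write $p=k(n-1)+r$ with $k\in\mathbb N$ and $r\in\{0,1,\ldots,n-2\}$. Let $T_n$ be a tree on $n$ vertices with $\Delta(T_n)=n-4$, and let $G\in\mathrm{Ex}(p;T_n)$. If $G$ is connected and $\Delta(G)\le n-4$, then $$p\le \min\Big\{\frac{3(n-1+r)+((-1)^n+(-1)^r)/2}2,\ \frac{r(n-1-r)}2\Big\},$$ and in particular $p\le 2n-7$.
   Context: All graphs are finite simple graphs; $\Delta(G)$ is the maximum degree of $G$. For a graph $L$, $\mathrm{ex}(p;L)$ is the maximum number of edges in a graph on $p$ vertices containing no subgraph isomorphic to $L$, and $\mathrm{Ex}(p;L)$ is the set of graphs on $p$ vertices containing no copy of $L$ and having exactly $\mathrm{ex}(p;L)$ edges. *)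

From mathcomp Require Import all_boot all_order all_algebra.
Set Implicit Arguments. Unset Strict Implicit. Unset Printing Implicit Defensive.

Definition simple_graph (V : finType) (g : rel V) : Prop :=
  symmetric g /\ irreflexive g.

Definition nedges (V : finType) (g : rel V) : nat :=
  #|[set E : {set V} | [exists x, exists y, g x y && (E == [set x; y])]]|.

Definition degree (V : finType) (g : rel V) (v : V) : nat := #|[pred u | g v u]|.

(* maximum degree Delta(G) (0 for the empty graph) *)
Definition maxdeg (V : finType) (g : rel V) : nat := \max_(v : V) degree g v.

Definition connected_graph (V : finType) (g : rel V) : Prop :=
  forall x y : V, connect g x y.

Definition acyclic (V : finType) (g : rel V) : Prop :=
  forall s : seq V, uniq s -> 3 <= size s -> ~~ cycle g s.

Definition is_tree (V : finType) (g : rel V) : Prop :=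
  simple_graph g /\ connected_graph g /\ acyclic g.

Definition contains_copy (W V : finType) (L : rel W) (g : rel V) : Prop :=
  exists f : W -> V, injective f /\ forall x y, L x y -> g (f x) (f y).

Definition in_Ex (W : finType) (p : nat) (L : rel W) (g : rel 'I_p) : Prop :=
  [/\ simple_graph g, ~ contains_copy L g &
      forall h : rel 'I_p, simple_graph h -> ~ contains_copy L h ->
        nedges h <= nedges g].

From mathcomp Require Import all_boot all_order all_algebra zify lra.
Import GRing.Theory Num.Theory.
Set Implicit Arguments. Unset Strict Implicit. Unset Printing Implicit Defensive.

(** Since [G] is [T]-free with maximal size, [2 e(G)] dominates the degree
    sum of any [T]-free graph on [p] vertices, while [Delta(G) <= n - 4]
    bounds it by [p (n - 4)]. Two [T]-free comparison graphs are used, both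
    disjoint unions of cliques [K_(n-1)] (too small to host the connected
    [T]) with a last component: a clique [K_r], or, when [k >= 2], a
    near-regular graph of degree [n - 5 < Delta(T)] on [n - 1 + r] vertices.
    Together the two comparisons rule out [k >= 2]; for [k = 1] the first one
    reads [2 p <= r (n - 1 - r)], which forces [r <= n - 6]. *)

Section Degrees.
Variables (V : finType) (g : rel V).

Lemma degreeE v : degree g v = #|[set u | g v u]|.
Proof. by apply: eq_card => u; rewrite inE. Qed.

Lemma handshake : simple_graph g -> 2 * nedges g = \sum_v degree g v.
Proof.
case=> g_sym g_irr.
set A := [set E : {set V} | [exists x, exists y, g x y && (E == [set x; y])]].
have card_edge E : E \in A -> #|E| = 2.
  rewrite inE => /existsP[x /existsP[y /andP[gxy /eqP->]]].
  by rewrite cards2; case: eqP gxy => // ->; rewrite g_irr.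
rewrite /nedges -/A mulnC -sum_nat_const.
transitivity (\sum_(E in A) \sum_(v | v \in E) 1).
  by apply: eq_bigr => E /card_edge; rewrite sum1_card.
rewrite (exchange_big_dep predT) //=; apply: eq_bigr => v _.
rewrite sum1_card degreeE.
rewrite (@eq_card _ _ [set [set v; u] | u in [set u | g v u]]); last first.
  move=> E.
  change ((E \in A) && (v \in E) = (E \in [set [set v; u] | u in [set u | g v u]])).
  apply/andP/imsetP.
  - case; rewrite inE => /existsP[x /existsP[y /andP[gxy /eqP->]]].
    rewrite in_set2 => /orP[]/eqP ->; first by exists y; rewrite ?inE.
    by exists x; rewrite ?inE 1?g_sym // setUC.
  - case=> u; rewrite inE => gvu ->; split; last by rewrite set21.
    by rewrite inE; apply/existsP; exists v; apply/existsP; exists u; rewrite gvu eqxx.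
apply: card_in_imset => u u'; rewrite !inE => gvu _ E.
have : u \in [set v; u'] by rewrite -E set22.
by rewrite in_set2 => /orP[/eqP uv|/eqP //]; move: gvu; rewrite uv g_irr.
Qed.

Lemma double_nedges_le : simple_graph g -> 2 * nedges g <= #|V| * maxdeg g.
Proof.
move=> g_simple; rewrite handshake // -sum_nat_const.
by apply: leq_sum => v _; apply: leq_bigmax.
Qed.

Lemma exists_maxdeg_vertex : 0 < #|V| -> exists v, degree g v = maxdeg g.
Proof.
by move=> V0; have [v vE] := eq_bigmax (degree g) V0; exists v; rewrite /maxdeg vE.
Qed.

End Degrees.

Section Copies.
Variables (W V : finType) (L : rel W) (g : rel V) (f : W -> V).
Hypotheses (f_inj : injective f) (f_hom : forall x y, L x y -> g (f x) (f y)).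

Lemma degree_le_copy w : degree L w <= degree g (f w).
Proof.
rewrite !degreeE -(card_imset _ f_inj); apply/subset_leq_card/subsetP.
by move=> y /imsetP[u]; rewrite inE => /f_hom gfu ->; rewrite inE.
Qed.

Lemma connected_copy_const (T : eqType) (phi : V -> T) :
  connected_graph L -> (forall x y, g x y -> phi x = phi y) ->
  forall x y, phi (f x) = phi (f y).
Proof.
move=> L_conn phi_edge x y; apply/esym/eqP.
rewrite -[_ == _]/(y \in [pred z | phi (f z) == phi (f x)]).
rewrite -(closed_connect _ (L_conn x y)) ?inE //.
by move=> u w /f_hom /phi_edge; rewrite !inE => ->.
Qed.

End Copies.

Lemma card_le_window n p (f : 'I_n -> 'I_p) base len : injective f ->
  (forall x, base <= f x < base + len) -> n <= len.
Proof.
move=> f_inj f_win.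
have lt_len x : f x - base < len by have /andP[? ?] := f_win x; lia.
pose h x : 'I_len := Ordinal (lt_len x).
have h_inj : injective h.
  move=> x y /(congr1 val) /= E; apply/f_inj/ord_inj.
  by have /andP[? ?] := f_win x; have /andP[? ?] := f_win y; lia.
by have := leq_card h h_inj; rewrite !card_ord.
Qed.

Lemma card_window p base len : base + len <= p ->
  #|[set y : 'I_p | base <= y < base + len]| = len.
Proof.
move=> le_p.
pose emb (j : 'I_len) : 'I_p := widen_ord le_p (rshift base j).
have emb_inj : injective emb by move=> i j /(congr1 val) /= /addnI /val_inj.
rewrite -[RHS]card_ord -cardsT -(card_imset _ emb_inj); apply: eq_card => y.
rewrite inE; apply/idP/imsetP => [/andP[le_y lt_y]|[j _ ->]].
  have lt_j : y - base < len by lia.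
  by exists (Ordinal lt_j); rewrite ?inE //; apply: val_inj => /=; lia.
by rewrite /emb /= leq_addr ltn_add2l ltn_ord.
Qed.

Lemma divn_eq_window d q y : 0 < d -> (y %/ d == q) = (q * d <= y < q * d + d).
Proof.
move=> d0; rewrite eqn_leq andbC leq_divRL // -[_ %/ _ <= _]ltnS ltn_divLR //.
by rewrite mulSn [d + _]addnC.
Qed.

Section BlocksGraph.
Variables (b s m : nat) (R : rel nat).
Hypothesis b_pos : 0 < b.
Hypothesis R_sym : forall a c, a < m -> c < m -> R a c = R c a.
Hypothesis R_irr : forall a, a < m -> R a a = false.

Local Notation p := (s * b + m).

Definition block (x : nat) : nat := if x < s * b then x %/ b else s.

(* [s] disjoint cliques on the windows [[i b, i b + b)], followed by the graph
   [R] on the last [m] vertices, read through their offsets from [s b]. *)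
Definition blocks_graph : rel 'I_p := fun x y =>
  [&& x != y, block x == block y & (x < s * b) || R (x - s * b) (y - s * b)].

Lemma block_lt x : (block x < s) = (x < s * b).
Proof. by rewrite /block; case: ifP => lt_x; rewrite ?ltnn // ltn_divLR. Qed.

Lemma blocks_graph_simple : simple_graph blocks_graph.
Proof.
split=> [x y|x]; last by rewrite /blocks_graph eqxx.
rewrite /blocks_graph [x == y]eq_sym [block x == _]eq_sym.
case: (block y =P block x) => [bE|] /=; last by rewrite !andbF.
rewrite -!block_lt bE block_lt; case: ltnP => //= le_x.
by rewrite R_sym //; have := ltn_ord x; have := ltn_ord y; lia.
Qed.

Lemma blocks_graph_block x y : blocks_graph x y -> block x = block y.
Proof. by case/and3P=> _ /eqP. Qed.

Lemma degree_blocks_head (x : 'I_p) : x < s * b -> degree blocks_graph x = b.-1.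
Proof.
move=> lt_x; set q := x %/ b.
have lt_q : q < s by rewrite ltn_divLR.
have le_win : q * b + b <= p.
  by rewrite addnC -mulSn (leq_trans _ (leq_addr m _)) // leq_mul2r lt_q orbT.
have x_win : x \in [set y : 'I_p | q * b <= y < q * b + b].
  by rewrite inE -divn_eq_window.
rewrite degreeE -[RHS](congr1 predn (card_window le_win)).
rewrite [in RHS](cardsD1 x) x_win /=.
apply: eq_card => y; rewrite !inE /blocks_graph lt_x /= andbT [x == y]eq_sym.
congr (_ && _); rewrite -divn_eq_window // /block lt_x -/q eq_sym.
case: ifP => // /negbT; rewrite -leqNgt => le_y.
have le_div : s <= y %/ b by rewrite leq_divRL.
by rewrite (gtn_eqF lt_q) (gtn_eqF (leq_trans lt_q le_div)).
Qed.

Lemma degree_blocks_tail (x : 'I_p) : s * b <= x ->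
  degree blocks_graph x = #|[set j : 'I_m | R (x - s * b) j]|.
Proof.
move=> le_x; rewrite degreeE -(card_imset _ (@rshift_inj (s * b) m)).
have block_x : block x = s by rewrite /block ltnNge le_x.
apply: eq_card => y; rewrite inE; apply/idP/imsetP => [|[j]].
  case/and3P=> _; rewrite block_x ltnNge le_x /= => /eqP block_y Rxy.
  have le_y : s * b <= y by rewrite leqNgt -block_lt -block_y ltnn.
  have lt_j : y - s * b < m by have := ltn_ord y; lia.
  by exists (Ordinal lt_j); rewrite ?inE //; apply: val_inj => /=; lia.
rewrite inE => Rxj ->; rewrite /blocks_graph block_x /block /= ltnNge leq_addr.
rewrite ltnNge le_x /= addKn Rxj eqxx !andbT; apply/eqP => /(congr1 val) /= xE.
by move: Rxj; rewrite xE addKn R_irr.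
Qed.

Lemma sum_degree_blocks :
  \sum_(x : 'I_p) degree blocks_graph x =
  s * b * b.-1 + \sum_(j < m) #|[set c : 'I_m | R j c]|.
Proof.
rewrite big_split_ord /=; congr (_ + _).
  transitivity (\sum_(i < s * b) b.-1).
    by apply: eq_bigr => i _; apply: degree_blocks_head; apply: ltn_ord i.
  by rewrite sum_nat_const card_ord.
apply: eq_bigr => j _; rewrite degree_blocks_tail /= ?leq_addr //.
by rewrite addKn.
Qed.

Lemma blocks_copy_in_tail n (T : rel 'I_n) (f : 'I_n -> 'I_p) :
  b < n -> connected_graph T -> injective f ->
  (forall x y, T x y -> blocks_graph (f x) (f y)) -> forall x, s * b <= f x.
Proof.
move=> lt_b T_conn f_inj f_hom x; rewrite leqNgt; apply/negP => lt_x.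
have blockE := connected_copy_const f_hom T_conn blocks_graph_block.
suff win y : f x %/ b * b <= f y < f x %/ b * b + b.
  by have := card_le_window f_inj win; lia.
have lt_y : f y < s * b by rewrite -block_lt (blockE y x) block_lt.
by move: (blockE y x); rewrite /block lt_x lt_y => /eqP; rewrite divn_eq_window.
Qed.

End BlocksGraph.

Arguments blocks_graph : clear implicits.

Definition cdiff (m a c : nat) : nat := if c <= a then a - c else a + m - c.

(* Cyclic distance at most [d / 2], plus, for odd [d], the matching joining
   [a] and [a + m / 2]. *)
Definition near_regular (m d : nat) : rel nat := fun a c =>
  [|| (0 < cdiff m a c) && (cdiff m a c <= d./2), m - d./2 <= cdiff m a c
    | odd d && ((a < m./2) && (c == a + m./2) || (c < m./2) && (a == c + m./2))].

Lemma near_regular_sym m d a c : a < m -> c < m ->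
  near_regular m d a c = near_regular m d c a.
Proof.
move=> lt_a lt_c; rewrite /near_regular /cdiff.
by case: (odd d); case: (leqP c a); case: (leqP a c); lia.
Qed.

Lemma near_regular_irr m d a : d < m -> near_regular m d a a = false.
Proof.
move=> lt_d; have := odd_double_half d.
by rewrite /near_regular /cdiff leqnn subnn -mul2n; case: (odd d); lia.
Qed.

Section NearRegular.
Variables m d : nat.
Hypothesis d_small : d.+2 <= m.

Local Notation h := d./2.
Local Notation q := m./2.

Lemma card_cyclic_ball :
  #|[set t : 'I_m | (0 < t <= h) || (m - h <= t)]| = 2 * h.
Proof.
have h2 : 2 * h <= d by rewrite -[X in _ <= X]odd_double_half -mul2n leq_addl.
have -> : [set t : 'I_m | (0 < t <= h) || (m - h <= t)] =
          [set t : 'I_m | 1 <= t < 1 + h] :|: [set t : 'I_m | m - h <= t < m - h + h].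
  by apply/setP => t; rewrite !inE; have := ltn_ord t; lia.
rewrite cardsU !card_window; try lia.
rewrite (_ : _ :&: _ = set0) ?cards0; first lia.
by apply/setP => t; rewrite !inE; lia.
Qed.

Lemma card_antipodal a : a < m ->
  #|[set c : 'I_m | (a < q) && (c == a + q :> nat) || (c < q) && (a == c + q)]| =
  (a < 2 * q).
Proof.
have [q_pos q2] : 0 < q /\ 2 * q <= m.
  by rewrite -[in X in _ /\ X](odd_double_half m); lia.
move=> lt_a; case: (ltnP a q) => [lt_aq|le_qa].
  have lt_aq' : a + q < m by lia.
  rewrite (_ : [set c | _] = [set Ordinal lt_aq']) ?cards1; last first.
    by apply/setP => c; rewrite !inE -val_eqE /=; lia.
  by symmetry; apply/eqP; rewrite eqb1; lia.
case: (ltnP a (2 * q)) => [lt_a2q|le_2qa].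
  have lt_aq' : a - q < m by lia.
  rewrite (_ : [set c | _] = [set Ordinal lt_aq']) ?cards1 //.
  by apply/setP => c; rewrite !inE -val_eqE /=; lia.
by rewrite (_ : [set c | _] = set0) ?cards0 //; apply/setP => c; rewrite !inE; lia.
Qed.

Lemma card_near_regular a : a < m ->
  #|[set c : 'I_m | near_regular m d a c]| = 2 * h + (odd d && (a < 2 * q)).
Proof.
move=> lt_a.
have dE := odd_double_half d; have mE := odd_double_half m.
have lt_hq : h < q by move: dE mE; rewrite -!mul2n; case: (odd d); case: (odd m); lia.
set ball := [set c : 'I_m | (0 < cdiff m a c <= h) || (m - h <= cdiff m a c)].
set anti := [set c : 'I_m |
  odd d && ((a < q) && (c == a + q :> nat) || (c < q) && (a == c + q))].
have -> : [set c : 'I_m | near_regular m d a c] = ball :|: anti.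
  by apply/setP => c; rewrite !inE /near_regular orbA.
rewrite cardsU (_ : ball :&: anti = set0) ?cards0 ?subn0; last first.
  apply/setP => c; rewrite !inE /cdiff; have := ltn_ord c.
  by case: (odd d); case: (leqP c a) => /=; lia.
have lt_cdiff (c : 'I_m) : cdiff m a c < m.
  by rewrite /cdiff; have := ltn_ord c; case: (leqP c a); lia.
pose shift (c : 'I_m) : 'I_m := Ordinal (lt_cdiff c).
have shift_inj : injective shift.
  move=> c c' /(congr1 val); rewrite /= /cdiff; have := ltn_ord c; have := ltn_ord c'.
  by case: (leqP c a); case: (leqP c' a) => ? ? ? ? E; apply: ord_inj; lia.
congr (_ + _).
  rewrite -card_cyclic_ball -[RHS](card_preimset _ shift_inj).
  by apply: eq_card => c; rewrite !inE.
rewrite /anti; case: (odd d).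
  by rewrite -(card_antipodal lt_a); apply: eq_card => c; rewrite !inE.
by rewrite (_ : [set c | _] = set0) ?cards0 //; apply/setP => c; rewrite !inE.
Qed.

Lemma card_near_regular_le a : a < m -> #|[set c : 'I_m | near_regular m d a c]| <= d.
Proof.
move=> lt_a; rewrite card_near_regular //; have := odd_double_half d.
by rewrite -mul2n; case: (odd d) (_ < _) => [] [] /=; lia.
Qed.

Lemma sum_card_near_regular :
  m * d <= (\sum_(a < m) #|[set c : 'I_m | near_regular m d a c]|).+1.
Proof.
have dE := odd_double_half d; have mE := odd_double_half m.
have lt_last : m.-1 < m by lia.
pose last : 'I_m := Ordinal lt_last.
have le_deg (a : 'I_m) :
    d <= #|[set c : 'I_m | near_regular m d a c]| + (a == last).
  rewrite card_near_regular // -val_eqE /=; have := ltn_ord a.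
  by move: dE mE; rewrite -!mul2n; case: (odd d); case: (odd m) => /=; lia.
have : \sum_(a < m) d <=
        \sum_(a < m) (#|[set c : 'I_m | near_regular m d a c]| + (a == last)).
  by apply: leq_sum => a _; apply: le_deg.
rewrite big_split sum_nat_const card_ord /=.
have sum_last : \sum_(a < m) (a == last : nat) = 1.
  by rewrite (bigD1 last) //= eqxx big1 // => a /negbTE ->.
by rewrite sum_last addn1.
Qed.

End NearRegular.

Lemma card_neq_ord m (j : 'I_m) : #|[set c : 'I_m | j != c]| = m.-1.
Proof.
have := cardsC1 j; rewrite card_ord => <-; apply: eq_card => c.
by rewrite !inE eq_sym.
Qed.

Section Extremal.
Variables (n p : nat) (T : rel 'I_n) (G : rel 'I_p).
Hypotheses (T_conn : connected_graph T) (G_ex : in_Ex T G).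

Lemma ex_ge_clique_packing b k r : 0 < b -> b < n -> r < n -> p = k * b + r ->
  k * b * b.-1 + r * r.-1 <= 2 * nedges G.
Proof.
move=> b_pos lt_b lt_r pE; subst p; case: G_ex => _ _ G_max.
pose R : rel nat := fun a c => a != c.
have R_sym a c : a < r -> c < r -> R a c = R c a by rewrite /R eq_sym.
have R_irr a : a < r -> R a a = false by rewrite /R eqxx.
have F_simple := blocks_graph_simple k b_pos R_sym.
have F_free : ~ contains_copy T (blocks_graph b k r R).
  case=> f [f_inj f_hom].
  have tail := blocks_copy_in_tail b_pos lt_b T_conn f_inj f_hom.
  suff : n <= r by lia.
  by apply: (card_le_window (base := k * b) f_inj) => x; rewrite tail ltn_ord.
have := G_max _ F_simple F_free.
rewrite -(leq_pmul2l (isT : 0 < 2)) handshake // sum_degree_blocks //.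
rewrite (eq_bigr (fun _ => r.-1)) ?sum_nat_const ?card_ord // => j _.
exact: card_neq_ord.
Qed.

Lemma ex_ge_near_regular b c m d v :
  0 < b -> b < n -> d < degree T v -> d.+2 <= m -> p = c * b + m ->
  c * b * b.-1 + m * d <= (2 * nedges G).+1.
Proof.
move=> b_pos lt_b lt_d le_m pE; subst p; case: G_ex => _ _ G_max.
have R_sym := @near_regular_sym m d.
have R_irr a : a < m -> near_regular m d a a = false.
  by move=> _; apply: near_regular_irr; lia.
have F_simple := blocks_graph_simple c b_pos R_sym.
have F_free : ~ contains_copy T (blocks_graph b c m (near_regular m d)).
  case=> f [f_inj f_hom].
  have tail := blocks_copy_in_tail b_pos lt_b T_conn f_inj f_hom.
  have lt_fv : f v - c * b < m by have := ltn_ord (f v); lia.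
  have := degree_le_copy f_inj f_hom v; rewrite degree_blocks_tail //.
  by have := card_near_regular_le le_m lt_fv; lia.
have := G_max _ F_simple F_free.
rewrite -(leq_pmul2l (isT : 0 < 2)) handshake // sum_degree_blocks //.
by have := sum_card_near_regular le_m; lia.
Qed.

End Extremal.

Lemma no_second_block (B k r e : nat) : 4 <= B -> r < B ->
  k.+2 * B * B.-1 + r * r.-1 <= e ->
  k.+1 * B * B.-1 + (B + r) * (B - 4) <= e.+1 ->
  e <= (k.+2 * B + r) * (B - 3) -> False.
Proof.
move=> /subnKC <-; move: (B - 4) => C.
by case: r => [|r] /=; rewrite ?subn1 /=; nia.
Qed.

Lemma single_block_bound B r e : 4 <= B -> r < B ->
  B * B.-1 + r * r.-1 <= e -> e <= (B + r) * (B - 3) ->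
  2 * (B + r) <= r * (B - r) /\ r + 5 <= B.
Proof.
move=> B4 rB H1 H2.
have key : 2 * (B + r) <= r * (B - r).
  move: B4 rB H1 H2 => /subnKC <-; move: (B - 4) => C.
  by case: r => [|r] /=; nia.
split=> //; move: rB key => /subnKC <-; move: (B - r.+1) => t; nia.
Qed.

Lemma sign_ge_N1 (R : realDomainType) (n : nat) : (-1 <= (-1) ^+ n :> R)%R.
Proof. by rewrite -signr_odd; case: (odd n); rewrite ?expr0 ?expr1 //; lra. Qed.

Theorem lemma2p3 (p n k r : nat) (T : rel 'I_n) (G : rel 'I_p) :
  (10 <= n)%N -> (n <= p)%N ->
  p = (k * (n - 1) + r)%N -> (r <= n - 2)%N ->
  is_tree T -> maxdeg T = (n - 4)%N ->
  @in_Ex _ p T G ->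
  connected_graph G -> (maxdeg G <= n - 4)%N ->
  [/\ (p%:R <= (3%:R * (n - 1 + r)%:R
                 + ((-1) ^+ n + (-1) ^+ r) / 2%:R) / 2%:R :> rat)%R,
      (p%:R <= (r * (n - 1 - r))%:R / 2%:R :> rat)%R
    & (p <= 2 * n - 7)%N].
Proof.
move=> n10 le_np pE le_r [_ [T_conn _]] dT G_ex _ dG.
have [v dv] : exists v, degree T v = n - 4.
  by rewrite -dT; apply: exists_maxdeg_vertex; rewrite card_ord; lia.
have G_ub : 2 * nedges G <= p * (n - 4).
  apply: leq_trans (double_nedges_le _) _; first by case: G_ex.
  by rewrite card_ord leq_mul2l dG orbT.
have lb1 := ex_ge_clique_packing T_conn G_ex (b := n - 1) (k := k) (r := r)
  ltac:(lia) ltac:(lia) ltac:(lia) pE.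
have k1 : k = 1.
  case: k pE lb1 => [|[|k]] pE lb1 //; first lia.
  have lb2 := ex_ge_near_regular T_conn G_ex (b := n - 1) (c := k.+1)
    (m := n - 1 + r) (d := n - 5) (v := v)
    ltac:(lia) ltac:(lia) ltac:(lia) ltac:(lia) ltac:(lia).
  exfalso; apply: (@no_second_block (n - 1) k r (2 * nedges G)); lia.
subst k; rewrite mul1n in pE lb1.
have [key le_r6] := @single_block_bound (n - 1) r (2 * nedges G)
  ltac:(lia) ltac:(lia) lb1 ltac:(by rewrite -pE (_ : n - 1 - 3 = n - 4); lia).
split; last lia.
- rewrite pE; have := sign_ge_N1 rat n; have := sign_ge_N1 rat r.
  have : (1 <= (n - 1 + r)%:R :> rat)%R by rewrite ler1n; lia.
  by move: (_%:R)%R => P; lra.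
- by rewrite ler_pdivlMr ?ltr0n // -natrM ler_nat; lia.
Qed.
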